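(* Let $\Gamma$ be a ring of loops: vertices $w_1,\dots,w_r$ ($r\ge 2$) arranged cyclically, where each pair of cyclically consecutive vertices $w_j,w_{j+1}$ (indices mod $r$) is joined by two parallel edges of equal length, forming a loop of length $\lambda_j$. Suppose the distinct loop lengths are $L_1,\dots,L_m$, with $L_i$ occurring $n_i$ times, and $L=\sum_j\lambda_j$. Then, with standard vertex conditions, the eigenfrequencies of $\mathbf{L}(\Gamma)$ are $0$ with multiplicity one, $4\pi N/L$ with multiplicity two for each positive integer $N$, and $2\pi N/L_i$ with multiplicity $n_i$ for each $i$ and positive integer $N$ (multiplicities adding when values coincide); equivalently the secular equation is $\Sigma(k)=\left(-1+e^{ikL/2}\right)^2\prod_{i=1}^m\left(-1+e^{iL_ik}\right)^{n_i}$. In particular the spectrum does not depend on the order of the loops around the ring.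
   Context: On each edge the operator is $\mathbf{L}=-\frac{d^2}{dx^2}$ with standard (Neumann–Kirchhoff) vertex conditions: continuity at each vertex and vanishing sum of outward normal derivatives. Eigenvalues are $\lambda=k^2$, $k\ge0$. *)

From Stdlib Require Import Reals Lra Lia List ClassicalDescription.
From Coquelicot Require Import Coquelicot.
Import ListNotations.
Open Scope R_scope.

(* Ring of loops with r vertices w_0, ..., w_{r-1} (indices mod r).
   Loop j (j < r) joins w_j and w_{(j+1) mod r} by two parallel edges
   (j,true) and (j,false), each of length lam j / 2, so the loop has
   length lam j.  Edge (j,b) is parametrised by x in [0, lam j / 2],
   x = 0 at w_j and x = lam j / 2 at w_{(j+1) mod r}.
   A function on the graph is  f : nat -> bool -> R -> R,  f j b being
   the function on edge (j,b) (only its values on [0, lam j/2] matter). *)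

Definition prev_vertex (r j : nat) : nat := ((j + r - 1) mod r)%nat.

Definition edge_eq (k l : R) (g : R -> R) (d0 d1 : R) : Prop :=
  (forall x, 0 < x < l -> ex_derive g x) /\
  (forall x, 0 < x < l -> is_derive (Derive g) x (- (k ^ 2) * g x)) /\
  filterlim g (at_right 0) (locally (g 0)) /\
  filterlim g (at_left l) (locally (g l)) /\
  filterlim (Derive g) (at_right 0) (locally d0) /\
  filterlim (Derive g) (at_left l) (locally d1).

Definition ring_eigenfun (r : nat) (lam : nat -> R) (k : R)
    (f : nat -> bool -> R -> R) : Prop :=
  exists D0 D1 : nat -> bool -> R,
    (forall j b, (j < r)%nat -> edge_eq k (lam j / 2) (f j b) (D0 j b) (D1 j b)) /\
    (forall j, (j < r)%nat ->
       let p := prev_vertex r j in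
       f j true 0 = f j false 0 /\
       f p true (lam p / 2) = f j true 0 /\
       f p false (lam p / 2) = f j true 0) /\
    (* Kirchhoff: sum of outward normal derivatives at w_j vanishes;
       outward derivative is -f'(0+) at x = 0 and f'(l-) at x = l *)
    (forall j, (j < r)%nat ->
       let p := prev_vertex r j in
       - D0 j true - D0 j false + D1 p true + D1 p false = 0).

Definition lincomb (m : nat) (c : nat -> R) (fs : nat -> nat -> bool -> R -> R)
    (j : nat) (b : bool) (x : R) : R :=
  fold_right Rplus 0 (map (fun i => c i * fs i j b x) (seq 0 m)).

Definition ring_indep (r : nat) (lam : nat -> R) (m : nat)
    (fs : nat -> nat -> bool -> R -> R) : Prop :=
  forall c : nat -> R,
    (forall j b x, (j < r)%nat -> 0 <= x <= lam j / 2 -> lincomb m c fs j b x = 0) ->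
    forall i, (i < m)%nat -> c i = 0.

Definition ring_multiplicity (r : nat) (lam : nat -> R) (k : R) (m : nat) : Prop :=
  (exists fs, (forall i, (i < m)%nat -> ring_eigenfun r lam k (fs i)) /\
              ring_indep r lam m fs) /\
  (forall fs, (forall i, (i < S m)%nat -> ring_eigenfun r lam k (fs i)) ->
              ~ ring_indep r lam (S m) fs).

Definition ind (P : Prop) : nat :=
  if excluded_middle_informative P then 1%nat else 0%nat.

Definition total_length (r : nat) (lam : nat -> R) : R :=
  fold_right Rplus 0 (map lam (seq 0 r)).

(* predicted multiplicity of eigenfrequency k:
   [k = 0] + 2 [k = 4 pi N / L, N >= 1] + sum over loops j of [k = 2 pi N / lam j, N >= 1]
   (summing over loops j is the same as summing n_i over distinct lengths L_i) *)
Definition predicted_mult (r : nat) (lam : nat -> R) (k : R) : nat :=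
  (ind (k = 0%R)
   + 2 * ind (exists N : nat, (1 <= N)%nat /\ (k = 4 * PI * INR N / total_length r lam)%R)
   + list_sum (map (fun j => ind (exists N : nat, (1 <= N)%nat /\ (k = 2 * PI * INR N / lam j)%R))
                   (seq 0 r)))%nat.

From Pilot Require Import Defs.
From Stdlib Require Import Reals Lra Lia List ZArith.
From Stdlib Require Import Classical ClassicalDescription IndefiniteDescription.
From Coquelicot Require Import Coquelicot.
Import ListNotations.
Open Scope R_scope.

(* On an edge, a solution of -g'' = k^2 g is determined by its value and slope at the
   left end (energy argument): it is P cos(kx) + Q sin(kx) for k > 0 and P + Q x for
   k = 0.  In these coordinates the vertex conditions say that the two edges of a loop
   share P, that the symmetric data (P, mean of Q) of loop j is the rotation by
   k*lam(j-1)/2 of that of loop j-1, and that the antisymmetric part (half difference of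
   Q) of loop j vanishes unless sin(k*lam j/2) = 0.  Around the whole ring a nonzero
   symmetric part survives iff k*L/2 is a multiple of 2 pi.  So the eigenspace has the
   basis of [modes]: the constant (k = 0), two cyclic modes (k = 4 pi N / L) and one
   antisymmetric mode per loop j with k = 2 pi N / lam j. *)

Definition sm (n : nat) (f : nat -> R) : R := fold_right Rplus 0 (map f (seq 0 n)).

Lemma sm_S n f : sm (S n) f = sm n f + f n.
Proof.
  unfold sm. rewrite seq_S, map_app, fold_right_app. simpl.
  induction (map f (seq 0 n)) as [|a l IH]; simpl; lra.
Qed.

Lemma sm_ext n f g : (forall i, (i < n)%nat -> f i = g i) -> sm n f = sm n g.
Proof.
  induction n; intros H; [reflexivity|].
  rewrite !sm_S, IHn, H; [reflexivity|lia|]. intros; apply H; lia.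
Qed.

Lemma sm_zero n f : (forall i, (i < n)%nat -> f i = 0) -> sm n f = 0.
Proof.
  induction n; intros H; [reflexivity|].
  rewrite sm_S, IHn, H; [lra|lia|]. intros; apply H; lia.
Qed.

Lemma sm_plus n f g : sm n (fun i => f i + g i) = sm n f + sm n g.
Proof. induction n; [unfold sm; simpl; lra|]. rewrite !sm_S, IHn. lra. Qed.

Lemma sm_scal n a f : sm n (fun i => a * f i) = a * sm n f.
Proof. induction n; [unfold sm; simpl; lra|]. rewrite !sm_S, IHn. lra. Qed.

Lemma sm_minus n f g : sm n (fun i => f i - g i) = sm n f - sm n g.
Proof. induction n; [unfold sm; simpl; lra|]. rewrite !sm_S, IHn. lra. Qed.

Lemma sm_front n f : sm (S n) f = f 0%nat + sm n (fun i => f (S i)).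
Proof. induction n; [unfold sm; simpl; lra|]. rewrite sm_S, IHn, (sm_S n). lra. Qed.

Lemma sm_one n f i :
  (i < n)%nat -> (forall i', (i' < n)%nat -> i' <> i -> f i' = 0) -> sm n f = f i.
Proof.
  induction n; intros Hi H; [lia|]. rewrite sm_S.
  destruct (Nat.eq_dec i n) as [->|Hne].
  - rewrite sm_zero; [lra|]. intros; apply H; lia.
  - rewrite IHn, (H n); [lra|lia|lia|lia|]. intros; apply H; lia.
Qed.

Lemma sm_swap n m F :
  sm n (fun i => sm m (fun j => F i j)) = sm m (fun j => sm n (fun i => F i j)).
Proof.
  induction n; [symmetry; apply sm_zero; intros; reflexivity|].
  rewrite sm_S, IHn, <- sm_plus. apply sm_ext; intros; rewrite sm_S; reflexivity.
Qed.

Lemma lincomb_sm m c fs j b x : lincomb m c fs j b x = sm m (fun i => c i * fs i j b x).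
Proof. reflexivity. Qed.

Definition skip (p l : nat) : nat := if Nat.ltb l p then l else S l.

Lemma sm_skip n p g : (p <= n)%nat -> sm (S n) g = sm n (fun l => g (skip p l)) + g p.
Proof.
  induction n; intros Hp.
  - replace p with 0%nat by lia. unfold sm; simpl; lra.
  - destruct (Nat.eq_dec p (S n)) as [->|Hne].
    + rewrite (sm_S (S n)). f_equal. apply sm_ext. intros i Hi. unfold skip.
      destruct (Nat.ltb_spec i (S n)); [reflexivity|lia].
    + rewrite sm_S, IHn, (sm_S n) by lia.
      replace (skip p n) with (S n) by (unfold skip; destruct (Nat.ltb_spec n p); lia). lra.
Qed.

(* c is a nonzero vector (c 0, ..., c m) orthogonal to the first m columns of M;
   M l i is the coefficient of unknown l in equation i. *)
Definition kernel_vector (m : nat) (M : nat -> nat -> R) (c : nat -> R) : Prop :=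
  (exists l, (l <= m)%nat /\ c l <> 0) /\
  forall i, (i < m)%nat -> sm (S m) (fun l => c l * M l i) = 0.

(* Gaussian elimination step: if M p m <> 0, eliminating unknown p with equation m
   reduces the system to m equations in m + 1 unknowns. *)
Lemma kernel_vector_pivot m (M : nat -> nat -> R) p c' :
  (p <= S m)%nat -> M p m <> 0 ->
  kernel_vector m (fun l i => M (skip p l) i - M (skip p l) m / M p m * M p i) c' ->
  exists c, kernel_vector (S m) M c.
Proof.
  intros Hp Hpm [[l0 [Hl0 Hc0]] Hc'].
  set (g := - sm (S m) (fun l => c' l * M (skip p l) m) / M p m).
  exists (fun l => if Nat.eqb l p then g else if Nat.ltb l p then c' l else c' (l - 1)%nat).
  assert (Hcs : forall l, (if Nat.eqb (skip p l) p then g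
                else if Nat.ltb (skip p l) p then c' (skip p l) else c' (skip p l - 1)%nat) = c' l).
  { intro l. unfold skip. destruct (Nat.ltb_spec l p).
    - destruct (Nat.eqb_spec l p); [lia|]. destruct (Nat.ltb_spec l p); [reflexivity|lia].
    - destruct (Nat.eqb_spec (S l) p); [lia|]. destruct (Nat.ltb_spec (S l) p); [lia|].
      f_equal; lia. }
  split.
  - exists (skip p l0). split; [unfold skip; destruct (Nat.ltb l0 p); lia|]. now rewrite Hcs.
  - intros i Hi. rewrite (sm_skip (S m) p), Nat.eqb_refl by lia.
    rewrite (sm_ext _ _ (fun l => c' l * M (skip p l) i)) by (intros; now rewrite Hcs).
    destruct (Nat.eq_dec i m) as [->|Hne].
    + unfold g. field. exact Hpm.
    + specialize (Hc' i ltac:(lia)). cbv beta in Hc'.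
      rewrite (sm_ext _ _ (fun l => c' l * M (skip p l) i
                 - (M p i / M p m) * (c' l * M (skip p l) m))) in Hc'
        by (intros; field; exact Hpm).
      rewrite sm_minus, sm_scal in Hc'. unfold g.
      replace (- sm (S m) (fun l => c' l * M (skip p l) m) / M p m * M p i) with
        (- (M p i / M p m * sm (S m) (fun l => c' l * M (skip p l) m))) by (field; exact Hpm).
      lra.
Qed.

Lemma kernel_vector_zero_column m (M : nat -> nat -> R) c' :
  (forall l, (l <= S m)%nat -> M l m = 0) -> kernel_vector m M c' ->
  exists c, kernel_vector (S m) M c.
Proof.
  intros Hz [[l0 [Hl0 Hc0]] Hc'].
  exists (fun l => if Nat.leb l m then c' l else 0). split.
  - exists l0. split; [lia|]. destruct (Nat.leb_spec l0 m); [auto|lia].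
  - intros i Hi. rewrite sm_S. destruct (Nat.leb_spec (S m) m); [lia|].
    rewrite (sm_ext _ _ (fun l => c' l * M l i)).
    2:{ intros l Hl. destruct (Nat.leb_spec l m); [reflexivity|lia]. }
    destruct (Nat.eq_dec i m) as [->|Hne].
    + rewrite sm_zero; [lra|]. intros l Hl. rewrite Hz by lia. ring.
    + rewrite Hc'; [lra|lia].
Qed.

Lemma kernel_vector_exists m (M : nat -> nat -> R) : exists c, kernel_vector m M c.
Proof.
  revert M. induction m; intros M.
  - exists (fun _ => 1). split; [exists 0%nat; split; [lia|lra]|]. intros; lia.
  - destruct (classic (exists p, (p <= S m)%nat /\ M p m <> 0)) as [[p [Hp Hpm]]|Hno].
    + destruct (IHm (fun l i => M (skip p l) i - M (skip p l) m / M p m * M p i)) as [c' Hc'].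
      exact (kernel_vector_pivot m M p c' Hp Hpm Hc').
    + destruct (IHm M) as [c' Hc']. apply (kernel_vector_zero_column m M c'); [|exact Hc'].
      intros l Hl. apply NNPP. intro Hx. apply Hno. exists l. auto.
Qed.

Lemma span_bound r lam (V : (nat -> bool -> R -> R) -> Prop) m
    (E : nat -> nat -> bool -> R -> R) :
  (forall f, V f -> exists c : nat -> R, forall j b x, (j < r)%nat -> 0 <= x <= lam j / 2 ->
      f j b x = lincomb m c E j b x) ->
  forall fs, (forall i, (i < S m)%nat -> V (fs i)) -> ~ ring_indep r lam (S m) fs.
Proof.
  intros Hspan fs Hfs Hind.
  destruct (functional_choice (fun i (c : nat -> R) => (i < S m)%nat ->
      forall j b x, (j < r)%nat -> 0 <= x <= lam j / 2 -> fs i j b x = lincomb m c E j b x))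
    as [C HC].
  { intro i. destruct (Nat.lt_ge_cases i (S m)) as [Hi|Hi].
    - destruct (Hspan (fs i) (Hfs i Hi)) as [c Hc]. exists c. auto.
    - exists (fun _ => 0). intros; lia. }
  destruct (kernel_vector_exists m (fun l i => C l i)) as [a [[l0 [Hl0 Ha0]] Ha]].
  apply Ha0. apply Hind; [|lia]. intros j b x Hj Hx.
  change (sm (S m) (fun l => a l * fs l j b x) = 0).
  rewrite (sm_ext _ _ (fun l => sm m (fun i => (a l * C l i) * E i j b x))).
  2:{ intros l Hl. rewrite HC, lincomb_sm by auto.
      rewrite <- sm_scal. apply sm_ext. intros; ring. }
  rewrite sm_swap. apply sm_zero. intros i Hi.
  rewrite (sm_ext _ _ (fun l => E i j b x * (a l * C l i))) by (intros; ring).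
  rewrite sm_scal, Ha by auto. ring.
Qed.

Lemma lim_plus {T} (F : (T -> Prop) -> Prop) {FF : Filter F} f g a b :
  filterlim f F (locally a) -> filterlim g F (locally b) ->
  filterlim (fun y => f y + g y) F (locally (a + b)).
Proof.
  intros Hf Hg. eapply filterlim_comp_2; [exact Hf|exact Hg|].
  exact (@filterlim_plus R_AbsRing R_NormedModule a b).
Qed.

Lemma lim_mult {T} (F : (T -> Prop) -> Prop) {FF : Filter F} f g a b :
  filterlim f F (locally a) -> filterlim g F (locally b) ->
  filterlim (fun y => f y * g y) F (locally (a * b)).
Proof.
  intros Hf Hg. eapply filterlim_comp_2; [exact Hf|exact Hg|].
  exact (@filterlim_mult R_AbsRing a b).
Qed.

Lemma lim_minus {T} (F : (T -> Prop) -> Prop) {FF : Filter F} f g a b :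
  filterlim f F (locally a) -> filterlim g F (locally b) ->
  filterlim (fun y => f y - g y) F (locally (a - b)).
Proof.
  intros Hf Hg. apply (lim_plus F f (fun y => - g y) a (- b) Hf).
  eapply filterlim_comp; [exact Hg|].
  exact (@filterlim_opp R_AbsRing R_NormedModule b).
Qed.

Lemma derive_lim_right (f : R -> R) (f' x : R) :
  is_derive f x f' -> filterlim f (at_right x) (locally (f x)).
Proof.
  intro H. eapply filterlim_filter_le_1; [apply filter_le_within|].
  apply (ex_derive_continuous (K:=R_AbsRing) (V:=R_NormedModule)). now exists f'.
Qed.

Lemma derive_lim_left (f : R -> R) (f' x : R) :
  is_derive f x f' -> filterlim f (at_left x) (locally (f x)).
Proof.
  intro H. eapply filterlim_filter_le_1; [apply filter_le_within|].
  apply (ex_derive_continuous (K:=R_AbsRing) (V:=R_NormedModule)). now exists f'.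
Qed.

Lemma near_right0 l : 0 < l -> at_right 0 (fun y => 0 < y < l).
Proof.
  intro Hl. exists (mkposreal l Hl). intros y Hy Hy0.
  apply Rabs_lt_between' in Hy. simpl in Hy. lra.
Qed.

Lemma near_leftl l : 0 < l -> at_left l (fun y => 0 < y < l).
Proof.
  intro Hl. exists (mkposreal l Hl). intros y Hy Hy0.
  apply Rabs_lt_between' in Hy. simpl in Hy. lra.
Qed.

Lemma lim_right_unique (f : R -> R) (x a b : R) :
  filterlim f (at_right x) (locally a) -> filterlim f (at_right x) (locally b) -> a = b.
Proof.
  apply (filterlim_locally_unique (K:=R_AbsRing) (V:=R_NormedModule)
           (FF:=Proper_StrongProper _ (at_right_proper_filter x))).
Qed.

Lemma lim_left_unique (f : R -> R) (x a b : R) :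
  filterlim f (at_left x) (locally a) -> filterlim f (at_left x) (locally b) -> a = b.
Proof.
  apply (filterlim_locally_unique (K:=R_AbsRing) (V:=R_NormedModule)
           (FF:=Proper_StrongProper _ (at_left_proper_filter x))).
Qed.

Lemma is_derive_value (f : R -> R) (x d d' : R) : is_derive f x d -> d = d' -> is_derive f x d'.
Proof. now intros H <-. Qed.

Lemma const_on (F : R -> R) (l c : R) :
  0 < l -> (forall x, 0 < x < l -> is_derive F x 0) ->
  filterlim F (at_right 0) (locally c) -> forall x, 0 < x < l -> F x = c.
Proof.
  intros Hl HF Hlim.
  assert (Hc : forall x y, 0 < x < l -> 0 < y < l -> F x = F y).
  { intros x y Hx Hy.
    assert (Hin : forall z, Rmin x y <= z <= Rmax x y -> 0 < z < l).
    { intros z Hz. split.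
      - eapply Rlt_le_trans; [|apply Hz]. apply Rmin_glb_lt; lra.
      - eapply Rle_lt_trans; [apply Hz|]. apply Rmax_lub_lt; lra. }
    destruct (MVT_gen F x y (fun _ => 0)) as [z [_ Heq]]; [| |lra].
    - intros z Hz. apply HF, Hin. split; apply Rlt_le, Hz.
    - intros z Hz. apply continuity_pt_filterlim.
      apply (ex_derive_continuous (K:=R_AbsRing) (V:=R_NormedModule)).
      exists 0. apply HF, Hin, Hz. }
  intros x Hx. apply (lim_right_unique F 0); [|exact Hlim].
  eapply filterlim_ext_loc; [|apply filterlim_const].
  eapply filter_imp; [|apply (near_right0 l Hl)]. intros y Hy. now apply Hc.
Qed.

Section EdgeUniqueness.
Variables (k l d0 d1 : R) (g s s' : R -> R).
Hypothesis Hl : 0 < l.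
Hypothesis Hg : edge_eq k l g d0 d1.
Hypothesis Hs : forall x, is_derive s x (s' x).
Hypothesis Hs' : forall x, is_derive s' x (- (k ^ 2) * s x).
Hypothesis Hs0 : s 0 = g 0.
Hypothesis Hs'0 : s' 0 = d0.

(* The energy (g' - s')^2 + k^2 (g - s)^2 of the difference is conserved and vanishes
   at 0+, so the derivatives agree on the open edge. *)
Lemma edge_slopes_agree : forall x, 0 < x < l -> Derive g x = s' x.
Proof.
  destruct Hg as [Hex [Hd2 [Hg0 [_ [HD0 _]]]]].
  set (E := fun y => (Derive g y - s' y) * (Derive g y - s' y)
                     + k ^ 2 * ((g y - s y) * (g y - s y))).
  assert (HE : forall x, 0 < x < l -> E x = 0).
  { apply (const_on E l 0 Hl).
    - intros x Hx.
      assert (Hu : is_derive (fun y => Derive g y - s' y) x (- (k ^ 2) * g x - - (k ^ 2) * s x))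
        by (apply (is_derive_minus (Derive g) s'); auto).
      assert (Hv : is_derive (fun y => g y - s y) x (Derive g x - s' x))
        by (apply (is_derive_minus g s); auto; apply Derive_correct; auto).
      eapply is_derive_value.
      + apply (is_derive_plus (fun y => (Derive g y - s' y) * (Derive g y - s' y))
                              (fun y => k ^ 2 * ((g y - s y) * (g y - s y)))).
        * apply (is_derive_mult (fun y => Derive g y - s' y) (fun y => Derive g y - s' y));
            [exact Hu|exact Hu|intros; apply Rmult_comm].
        * apply is_derive_scal. apply (is_derive_mult (fun y => g y - s y) (fun y => g y - s y));
            [exact Hv|exact Hv|intros; apply Rmult_comm].
      + unfold plus, mult; simpl. ring.
    - assert (Hlim : filterlim E (at_right 0)
                 (locally ((d0 - s' 0) * (d0 - s' 0) + k ^ 2 * ((g 0 - s 0) * (g 0 - s 0))))).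
      { unfold E. pose proof (derive_lim_right _ _ _ (Hs 0)).
        pose proof (derive_lim_right _ _ _ (Hs' 0)).
        apply lim_plus; [apply _| |]; [|apply lim_mult; [apply _|apply filterlim_const|]];
          apply lim_mult; try apply _; apply lim_minus; try apply _; auto. }
      rewrite Hs0, Hs'0 in Hlim.
      replace ((d0 - d0) * (d0 - d0) + k ^ 2 * ((g 0 - g 0) * (g 0 - g 0))) with 0 in Hlim
        by ring.
      exact Hlim. }
  intros x Hx. specialize (HE x Hx). unfold E in HE.
  assert (0 <= k ^ 2 * ((g x - s x) * (g x - s x)))
    by (apply Rmult_le_pos; [apply pow2_ge_0|apply Rle_0_sqr]).
  pose proof (Rle_0_sqr (Derive g x - s' x)). unfold Rsqr in *. nra.
Qed.

Lemma edge_unique : (forall x, 0 <= x <= l -> g x = s x) /\ d1 = s' l.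
Proof.
  pose proof edge_slopes_agree as HD.
  destruct Hg as [Hex [Hd2 [Hg0 [Hgl [HD0 HD1]]]]].
  assert (HV : forall x, 0 < x < l -> g x - s x = 0).
  { apply (const_on (fun y => g y - s y) l 0 Hl).
    - intros x Hx. eapply is_derive_value; [apply (is_derive_minus g s); auto|].
      + apply Derive_correct; auto.
      + rewrite (HD x Hx). unfold minus, plus, opp; simpl. ring.
    - pose proof (lim_minus _ g s _ _ Hg0 (derive_lim_right _ _ _ (Hs 0))) as Hlim.
      rewrite Hs0, Rminus_diag in Hlim. exact Hlim. }
  split.
  - intros x [Hx0 Hxl].
    destruct (Rle_lt_or_eq_dec 0 x Hx0) as [H0|<-]; [|now rewrite Hs0].
    destruct (Rle_lt_or_eq_dec x l Hxl) as [H1| ->]; [specialize (HV x (conj H0 H1)); lra|].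
    apply (lim_left_unique g l); [exact Hgl|].
    eapply filterlim_ext_loc; [|apply (derive_lim_left _ _ _ (Hs l))].
    eapply filter_imp; [|apply (near_leftl l Hl)]. intros y Hy. specialize (HV y Hy). lra.
  - apply (lim_left_unique (Derive g) l); [exact HD1|].
    eapply filterlim_ext_loc; [|apply (derive_lim_left _ _ _ (Hs' l))].
    eapply filter_imp; [|apply (near_leftl l Hl)]. intros y Hy. symmetry; apply HD; auto.
Qed.

End EdgeUniqueness.

Lemma trig_edge k l P Q :
  edge_eq k l (fun x => P * cos (k * x) + Q * sin (k * x)) (Q * k)
    (- (P * k * sin (k * l)) + Q * k * cos (k * l)).
Proof.
  set (g := fun x => P * cos (k * x) + Q * sin (k * x)).
  set (gd := fun x => - (P * k * sin (k * x)) + Q * k * cos (k * x)).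
  assert (Hg : forall x, is_derive g x (gd x)) by (intro x; unfold g, gd; auto_derive; auto; ring).
  assert (Hgd : forall x, is_derive gd x (- (k ^ 2) * g x))
    by (intro x; unfold g, gd; auto_derive; auto; ring).
  assert (HD : forall x, gd x = Derive g x) by (intro x; symmetry; apply is_derive_unique, Hg).
  split; [|split; [|split; [|split; [|split]]]].
  - intros y _. exists (gd y). apply Hg.
  - intros y _. eapply is_derive_ext; [exact HD|]. apply Hgd.
  - apply (derive_lim_right _ _ _ (Hg 0)).
  - apply (derive_lim_left _ _ _ (Hg l)).
  - replace (Q * k) with (gd 0) by (unfold gd; rewrite Rmult_0_r, sin_0, cos_0; ring).
    eapply filterlim_ext; [exact HD|]. apply (derive_lim_right _ _ _ (Hgd 0)).
  - eapply filterlim_ext; [exact HD|]. apply (derive_lim_left _ _ _ (Hgd l)).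
Qed.

Lemma edge_solution_pos k l g d0 d1 : 0 < k -> 0 < l -> edge_eq k l g d0 d1 ->
  (forall x, 0 <= x <= l -> g x = g 0 * cos (k * x) + (d0 / k) * sin (k * x)) /\
  d1 = - (g 0 * k * sin (k * l)) + (d0 / k) * k * cos (k * l).
Proof.
  intros Hk Hl He.
  apply (edge_unique k l d0 d1 g (fun x => g 0 * cos (k * x) + (d0 / k) * sin (k * x))
     (fun x => - (g 0 * k * sin (k * x)) + (d0 / k) * k * cos (k * x)) Hl He).
  - intro x. auto_derive; auto. ring.
  - intro x. auto_derive; auto. ring.
  - rewrite Rmult_0_r, sin_0, cos_0; ring.
  - rewrite Rmult_0_r, sin_0, cos_0. field. lra.
Qed.

Lemma edge_solution_zero l g d0 d1 : 0 < l -> edge_eq 0 l g d0 d1 ->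
  (forall x, 0 <= x <= l -> g x = g 0 + d0 * x) /\ d1 = d0.
Proof.
  intros Hl He.
  apply (edge_unique 0 l d0 d1 g (fun x => g 0 + d0 * x) (fun _ => d0) Hl He);
    [intro x; auto_derive; auto; ring|intro x; auto_derive; auto; ring|ring|reflexivity].
Qed.

Lemma prev_cases r j : (0 < r)%nat -> (j < r)%nat ->
  (j = 0%nat /\ prev_vertex r j = (r - 1)%nat) \/
  ((1 <= j)%nat /\ prev_vertex r j = (j - 1)%nat).
Proof.
  intros Hr Hj. unfold prev_vertex. destruct j.
  - left. split; auto. apply Nat.mod_small. lia.
  - right. split; [lia|]. replace (S j + r - 1)%nat with (j + 1 * r)%nat by lia.
    rewrite Nat.Div0.mod_add, Nat.mod_small; lia.
Qed.

Lemma prev_lt r j : (0 < r)%nat -> (j < r)%nat -> (prev_vertex r j < r)%nat.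
Proof. intros. destruct (prev_cases r j) as [[_ ->]|[_ ->]]; lia. Qed.

Lemma next_exists r p : (0 < r)%nat -> (p < r)%nat -> exists j, (j < r)%nat /\ prev_vertex r j = p.
Proof.
  intros Hr Hp. destruct (Nat.lt_ge_cases (S p) r).
  - exists (S p). split; auto. destruct (prev_cases r (S p) Hr H) as [[H1 _]|[_ ->]]; lia.
  - exists 0%nat. split; [lia|]. destruct (prev_cases r 0 Hr Hr) as [[_ ->]|[H1 _]]; lia.
Qed.

(* [vpos lam j] = (lam 0 + ... + lam (j-1)) / 2 is the distance from w_0 to w_j along
   one edge of each loop; [vpos lam r] = L / 2 is the length of a full turn. *)
Definition vpos (lam : nat -> R) (j : nat) : R := total_length j lam / 2.

Lemma vpos_0 lam : vpos lam 0 = 0.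
Proof. unfold vpos, total_length. simpl. lra. Qed.

Lemma vpos_S lam j : vpos lam (S j) = vpos lam j + lam j / 2.
Proof.
  unfold vpos, total_length. rewrite seq_S, map_app, fold_right_app. simpl.
  enough (fold_right Rplus (lam j + 0) (map lam (seq 0 j))
          = fold_right Rplus 0 (map lam (seq 0 j)) + lam j) by lra.
  induction (map lam (seq 0 j)) as [|a l IH]; simpl; lra.
Qed.

Lemma vpos_pos lam j : (forall i, (i < j)%nat -> 0 < lam i) -> (1 <= j)%nat -> 0 < vpos lam j.
Proof.
  intros H Hj. induction j as [|j IH]; [lia|]. rewrite vpos_S.
  pose proof (H j ltac:(lia)). destruct j; [rewrite vpos_0; lra|].
  assert (0 < vpos lam (S j)) by (apply IH; [intros; apply H; lia|lia]). lra.
Qed.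

Lemma prev_vpos r lam j : (0 < r)%nat -> (j < r)%nat ->
  let p := prev_vertex r j in
  (j = 0%nat /\ vpos lam p + lam p / 2 = vpos lam j + vpos lam r) \/
  (j <> 0%nat /\ vpos lam p + lam p / 2 = vpos lam j).
Proof.
  intros Hr Hj p. destruct (prev_cases r j Hr Hj) as [[-> Hp]|[H1 Hp]]; unfold p; rewrite Hp.
  - left. split; auto. rewrite <- vpos_S, vpos_0. replace (S (r - 1)) with r by lia. lra.
  - right. split; [lia|]. rewrite <- vpos_S. f_equal. lia.
Qed.

Definition trig_fun (k : R) (P Q : nat -> bool -> R) : nat -> bool -> R -> R :=
  fun j b x => P j b * cos (k * x) + Q j b * sin (k * x).

Definition trig_vertex_conditions (r : nat) (lam : nat -> R) (k : R)
    (P Q : nat -> bool -> R) : Prop :=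
  forall j, (j < r)%nat ->
    let p := prev_vertex r j in
    let c := cos (k * (lam p / 2)) in
    let s := sin (k * (lam p / 2)) in
    P j true = P j false /\
    P p true * c + Q p true * s = P j true /\
    P p false * c + Q p false * s = P j true /\
    - (Q j true * k) - (Q j false * k)
      + (- (P p true * k * s) + Q p true * k * c)
      + (- (P p false * k * s) + Q p false * k * c) = 0.

Lemma trig_eigenfun r lam k P Q :
  trig_vertex_conditions r lam k P Q -> ring_eigenfun r lam k (trig_fun k P Q).
Proof.
  intro H.
  exists (fun j b => Q j b * k),
         (fun j b => - (P j b * k * sin (k * (lam j / 2))) + Q j b * k * cos (k * (lam j / 2))).
  split; [intros; apply trig_edge|]. unfold trig_fun.
  split; intros j Hj; destruct (H j Hj) as [H1 [H2 [H3 H4]]]; cbv zeta in *; [|exact H4].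
  rewrite Rmult_0_r, cos_0, sin_0, H2, H3, H1. repeat split; ring.
Qed.

Lemma eigenfun_trig r lam k f : 0 < k -> (2 <= r)%nat -> (forall i, (i < r)%nat -> 0 < lam i) ->
  ring_eigenfun r lam k f ->
  exists P Q, trig_vertex_conditions r lam k P Q /\
    forall j b x, (j < r)%nat -> 0 <= x <= lam j / 2 -> f j b x = trig_fun k P Q j b x.
Proof.
  intros Hk Hr Hl [D0 [D1 [Hedge [Hcont Hkir]]]].
  assert (Hsol : forall j b, (j < r)%nat ->
     (forall x, 0 <= x <= lam j / 2 ->
        f j b x = f j b 0 * cos (k * x) + (D0 j b / k) * sin (k * x)) /\
     D1 j b = - (f j b 0 * k * sin (k * (lam j / 2))) + (D0 j b / k) * k * cos (k * (lam j / 2))).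
  { intros j b Hj. apply edge_solution_pos; auto. pose proof (Hl j Hj); lra. }
  exists (fun j b => f j b 0), (fun j b => D0 j b / k). split.
  - intros j Hj p c s.
    assert (Hp : (p < r)%nat) by (apply prev_lt; [lia|auto]).
    assert (Hend : 0 <= lam p / 2 <= lam p / 2) by (pose proof (Hl p Hp); lra).
    destruct (Hcont j Hj) as [H1 [H2 H3]]. pose proof (Hkir j Hj) as H4.
    cbv zeta in H2, H3, H4. fold p in H2, H3, H4.
    destruct (Hsol p true Hp) as [Ht Ht1]. destruct (Hsol p false Hp) as [Hf Hf1].
    rewrite (Ht _ Hend) in H2. rewrite (Hf _ Hend) in H3. rewrite Ht1, Hf1 in H4.
    fold p c s in H2, H3, H4.
    repeat split; [exact H1|exact H2|exact H3|].
    replace (D0 j true / k * k) with (D0 j true) by (field; lra).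
    replace (D0 j false / k * k) with (D0 j false) by (field; lra). exact H4.
  - intros j b x Hj Hx. apply (Hsol j b Hj), Hx.
Qed.

(* The eigenmodes.  [MConst] is the constant mode (k = 0); [MCos] and [MSin] are the
   cyclic modes cos(k(vpos j + x)) and sin(k(vpos j + x)) on both edges of loop j;
   [MLoop j] is sin(kx) on edge (j,true), -sin(kx) on edge (j,false), 0 elsewhere. *)
Inductive mode := MConst | MCos | MSin | MLoop (j : nat).

Definition mode_eq_dec (a b : mode) : {a = b} + {a <> b}.
Proof. decide equality. apply Nat.eq_dec. Defined.

Definition mode_P (k : R) (lam : nat -> R) (t : mode) (j : nat) (b : bool) : R :=
  match t with
  | MConst => 1
  | MCos => cos (k * vpos lam j)
  | MSin => sin (k * vpos lam j)
  | MLoop _ => 0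
  end.

Definition mode_Q (k : R) (lam : nat -> R) (t : mode) (j : nat) (b : bool) : R :=
  match t with
  | MConst => 0
  | MCos => - sin (k * vpos lam j)
  | MSin => cos (k * vpos lam j)
  | MLoop j' => if Nat.eqb j j' then (if b then 1 else -1) else 0
  end.

Definition mode_fun (k : R) (lam : nat -> R) (t : mode) : nat -> bool -> R -> R :=
  trig_fun k (mode_P k lam t) (mode_Q k lam t).

Definition cyclic_freq (r : nat) (lam : nat -> R) (k : R) : Prop :=
  exists N : nat, (1 <= N)%nat /\ k = 4 * PI * INR N / total_length r lam.

Definition loop_freq (lam : nat -> R) (k : R) (j : nat) : Prop :=
  exists N : nat, (1 <= N)%nat /\ k = 2 * PI * INR N / lam j.

Definition include_if (P : Prop) (l : list mode) : list mode :=
  if excluded_middle_informative P then l else [].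

Definition loop_modes (lam : nat -> R) (k : R) (js : list nat) : list mode :=
  flat_map (fun j => include_if (loop_freq lam k j) [MLoop j]) js.

Definition modes (r : nat) (lam : nat -> R) (k : R) : list mode :=
  include_if (k = 0) [MConst] ++ include_if (cyclic_freq r lam k) [MCos; MSin]
  ++ loop_modes lam k (seq 0 r).

Lemma modes_length r lam k : length (modes r lam k) = predicted_mult r lam k.
Proof.
  unfold modes, loop_modes, predicted_mult, Defs.ind, include_if.
  rewrite !length_app, Nat.add_assoc. f_equal; [f_equal|].
  - destruct (excluded_middle_informative (k = 0)); reflexivity.
  - unfold cyclic_freq. destruct (excluded_middle_informative _); reflexivity.
  - induction (seq 0 r) as [|j js IH]; [reflexivity|]. simpl. rewrite length_app, IH.
    unfold loop_freq. destruct (excluded_middle_informative _); reflexivity.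
Qed.

Lemma in_include_if P l t : In t (include_if P l) -> P /\ In t l.
Proof. unfold include_if. destruct (excluded_middle_informative P); simpl; tauto. Qed.

Lemma in_loop_modes lam k js t :
  In t (loop_modes lam k js) -> exists j, t = MLoop j /\ In j js /\ loop_freq lam k j.
Proof.
  intro H. apply in_flat_map in H as [j [Hj H]]. apply in_include_if in H as [Hf [<-|[]]].
  now exists j.
Qed.

Lemma modes_in r lam k t : In t (modes r lam k) ->
  (t = MConst /\ k = 0) \/ ((t = MCos \/ t = MSin) /\ cyclic_freq r lam k) \/
  (exists j, t = MLoop j /\ (j < r)%nat /\ loop_freq lam k j).
Proof.
  unfold modes. rewrite !in_app_iff. intros [H|[H|H]].
  - apply in_include_if in H as [Hk [<-|[]]]. now left.
  - apply in_include_if in H as [Hc [<-|[<-|[]]]]; right; left; auto.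
  - apply in_loop_modes in H as [j [-> [Hj Hf]]]. apply in_seq in Hj.
    right; right. exists j. repeat split; auto; lia.
Qed.

Lemma modes_NoDup r lam k : NoDup (modes r lam k).
Proof.
  assert (Hloop : forall js, NoDup js -> NoDup (loop_modes lam k js)).
  { induction js as [|j js IH]; intro Hnd; [constructor|]. inversion Hnd; subst.
    unfold loop_modes, include_if; simpl. destruct (excluded_middle_informative _); [|now apply IH].
    constructor; [|now apply IH]. intro Hin.
    apply in_loop_modes in Hin as [j' [Hj' [Hin _]]]. injection Hj' as ->. contradiction. }
  unfold modes. apply NoDup_app; [|apply NoDup_app|].
  - unfold include_if; destruct (excluded_middle_informative _); repeat constructor; simpl; tauto.
  - unfold include_if; destruct (excluded_middle_informative _); repeat constructor;
      simpl; intuition discriminate.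
  - apply Hloop, seq_NoDup.
  - intros t Ht Ht'. apply in_include_if in Ht as [_ [<-|[<-|[]]]];
      apply in_loop_modes in Ht' as [j [Hj _]]; discriminate.
  - intros t Ht Ht'. apply in_include_if in Ht as [_ [<-|[]]]. apply in_app_iff in Ht' as [H|H].
    + apply in_include_if in H as [_ [H|[H|[]]]]; discriminate.
    + apply in_loop_modes in H as [j [Hj _]]; discriminate.
Qed.

Lemma cyclic_freq_pos r lam k : (1 <= r)%nat -> (forall i, (i < r)%nat -> 0 < lam i) ->
  cyclic_freq r lam k -> 0 < k.
Proof.
  intros Hr Hl [N [HN ->]]. pose proof (vpos_pos lam r Hl Hr). unfold vpos in H.
  pose proof PI_RGT_0. pose proof (le_INR 1 N HN). simpl in H1.
  apply Rdiv_lt_0_compat; nra.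
Qed.

Lemma loop_freq_pos lam k j : 0 < lam j -> loop_freq lam k j -> 0 < k.
Proof.
  intros Hl [N [HN ->]]. pose proof PI_RGT_0. pose proof (le_INR 1 N HN). simpl in H0.
  apply Rdiv_lt_0_compat; nra.
Qed.

Lemma modes_zero r lam : (1 <= r)%nat -> (forall i, (i < r)%nat -> 0 < lam i) ->
  modes r lam 0 = [MConst].
Proof.
  intros Hr Hl.
  destruct (modes r lam 0) as [|t ts] eqn:Hm.
  - exfalso. assert (In MConst (modes r lam 0)).
    { unfold modes, include_if. destruct (excluded_middle_informative (0 = 0)); [left; auto|lra]. }
    rewrite Hm in H. destruct H.
  - assert (Hall : forall u, In u (modes r lam 0) -> u = MConst).
    { intros u Hu. destruct (modes_in r lam 0 u Hu) as [[-> _]|[[_ Hc]|[j [_ [Hj Hf]]]]]; auto.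
      - pose proof (cyclic_freq_pos r lam 0 Hr Hl Hc). lra.
      - pose proof (loop_freq_pos lam 0 j (Hl j Hj) Hf). lra. }
    pose proof (modes_NoDup r lam 0) as Hnd. rewrite Hm in Hnd, Hall.
    rewrite (Hall t (or_introl eq_refl)). destruct ts as [|u us]; [reflexivity|].
    inversion Hnd; subst. exfalso. apply H1. left.
    rewrite (Hall u (or_intror (or_introl eq_refl))), (Hall t (or_introl eq_refl)). reflexivity.
Qed.

Lemma sin_INR_PI N : sin (INR N * PI) = 0.
Proof. apply sin_eq_0_1. exists (Z.of_nat N). now rewrite INR_IZR_INZ. Qed.

(* At a cyclic frequency, k*L/2 is a multiple of 2 pi, so the phase k*vpos is consistent
   around the ring: walking along loop p from vpos p lands on vpos j modulo 2 pi. *)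
Lemma cyclic_shift r lam k : (0 < r)%nat -> (forall i, (i < r)%nat -> 0 < lam i) ->
  cyclic_freq r lam k -> forall j, (j < r)%nat ->
  let p := prev_vertex r j in
  cos (k * vpos lam p + k * (lam p / 2)) = cos (k * vpos lam j) /\
  sin (k * vpos lam p + k * (lam p / 2)) = sin (k * vpos lam j).
Proof.
  intros Hr Hl [N [HN Hk]] j Hj p.
  assert (HL : 0 < total_length r lam)
    by (pose proof (vpos_pos lam r Hl Hr); unfold vpos in H; lra).
  assert (Hturn : k * vpos lam r = 2 * INR N * PI) by (rewrite Hk; unfold vpos; field; lra).
  unfold p. rewrite <- Rmult_plus_distr_l.
  destruct (prev_vpos r lam j Hr Hj) as [[_ ->]|[_ ->]]; [|auto].
  rewrite Rmult_plus_distr_l, Hturn. split; [apply cos_period|apply sin_period].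
Qed.

Lemma modes_eigenfun r lam k t : (2 <= r)%nat -> (forall i, (i < r)%nat -> 0 < lam i) ->
  In t (modes r lam k) -> ring_eigenfun r lam k (mode_fun k lam t).
Proof.
  intros Hr Hl Hin. apply trig_eigenfun. intros j Hj p c s.
  destruct (modes_in r lam k t Hin) as [[-> ->]|[[Ht Hc]|[j0 [-> [Hj0 Hf]]]]].
  - unfold c, s. simpl. rewrite !Rmult_0_l, cos_0, sin_0. repeat split; ring.
  - destruct (cyclic_shift r lam k ltac:(lia) Hl Hc j Hj) as [Hcos Hsin].
    fold p in Hcos, Hsin. rewrite cos_plus in Hcos. rewrite sin_plus in Hsin.
    fold c s in Hcos, Hsin.
    destruct Ht as [-> | ->]; simpl; repeat split; nra.
  - assert (Hs0 : sin (k * (lam j0 / 2)) = 0).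
    { destruct Hf as [N [HN Hk]]. pose proof (Hl j0 Hj0).
      replace (k * (lam j0 / 2)) with (INR N * PI) by (rewrite Hk; field; lra). apply sin_INR_PI. }
    assert (Hs : p = j0 -> s = 0) by (intros <-; exact Hs0).
    simpl. destruct (Nat.eqb_spec p j0) as [Hpe|_]; [rewrite (Hs Hpe)|];
      destruct (Nat.eqb j j0); repeat split; ring.
Qed.

(* A sample (w, j, b, x) is the functional g |-> w * g j b x; a list of samples is
   their sum.  Suitable samples are dual to the modes and prove them independent. *)
Definition sample := (R * nat * bool * R)%type.

Definition eval_samples (ps : list sample) (g : nat -> bool -> R -> R) : R :=
  fold_right Rplus 0 (map (fun '(w, j, b, x) => w * g j b x) ps).

Definition on_graph (r : nat) (lam : nat -> R) (ps : list sample) : Prop :=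
  forall w j b x, In (w, j, b, x) ps -> (j < r)%nat /\ 0 <= x <= lam j / 2.

Lemma eval_samples_cons w j b x ps g :
  eval_samples ((w, j, b, x) :: ps) g = w * g j b x + eval_samples ps g.
Proof. reflexivity. Qed.

Lemma eval_samples_lincomb ps n c fs :
  eval_samples ps (lincomb n c fs) = sm n (fun i => c i * eval_samples ps (fs i)).
Proof.
  induction ps as [|[[[w j] b] x] ps IH].
  - symmetry. apply sm_zero. intros. unfold eval_samples. simpl. ring.
  - rewrite eval_samples_cons, IH, lincomb_sm.
    rewrite <- sm_scal, <- sm_plus. apply sm_ext. intros. rewrite eval_samples_cons. ring.
Qed.

Lemma eval_samples_vanish r lam ps g : on_graph r lam ps ->
  (forall j b x, (j < r)%nat -> 0 <= x <= lam j / 2 -> g j b x = 0) -> eval_samples ps g = 0.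
Proof.
  intros Hps Hg. induction ps as [|[[[w j] b] x] ps IH]; [reflexivity|].
  rewrite eval_samples_cons. destruct (Hps w j b x (or_introl eq_refl)) as [Hj Hx].
  rewrite Hg, IH by (auto; intros ? ? ? ? H; apply (Hps _ _ _ _ (or_intror H))). ring.
Qed.

Definition probe_point (k : R) (lam : nat -> R) (j : nat) : R := Rmin (lam j / 2) (PI / (2 * k)).

Lemma probe_point_spec k lam j : 0 < k -> 0 < lam j ->
  0 < probe_point k lam j <= lam j / 2 /\ 0 < sin (k * probe_point k lam j).
Proof.
  intros Hk Hl. pose proof PI_RGT_0. unfold probe_point.
  assert (Hx : 0 < Rmin (lam j / 2) (PI / (2 * k)))
    by (apply Rmin_glb_lt; [lra|apply Rdiv_lt_0_compat; lra]).
  repeat split; [exact Hx|apply Rmin_l|].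
  apply sin_gt_0; [nra|].
  pose proof (Rmult_le_compat_l k _ _ (Rlt_le _ _ Hk) (Rmin_r (lam j / 2) (PI / (2 * k)))).
  replace (k * (PI / (2 * k))) with (PI / 2) in H0 by (field; lra). lra.
Qed.

Definition probes (k : R) (lam : nat -> R) (t : mode) : list sample :=
  match t with
  | MConst | MCos => [(1, 0%nat, true, 0)]
  | MSin =>
      let x := probe_point k lam 0 in
      [(/ (2 * sin (k * x)), 0%nat, true, x); (/ (2 * sin (k * x)), 0%nat, false, x);
       (- cos (k * x) / sin (k * x), 0%nat, true, 0)]
  | MLoop j =>
      let x := probe_point k lam j in
      [(/ (2 * sin (k * x)), j, true, x); (- / (2 * sin (k * x)), j, false, x)]
  end.

Lemma probes_on_graph r lam k t : (2 <= r)%nat -> (forall i, (i < r)%nat -> 0 < lam i) ->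
  In t (modes r lam k) -> on_graph r lam (probes k lam t).
Proof.
  intros Hr Hl Ht. red. intros w j b x Hp.
  assert (H0 : 0 <= 0 <= lam 0%nat / 2) by (pose proof (Hl 0%nat ltac:(lia)); lra).
  destruct (modes_in r lam k t Ht) as [[-> _]|[[[-> | ->] Hc]|[j0 [-> [Hj0 Hf]]]]];
    simpl in Hp.
  - destruct Hp as [Hp|[]]. injection Hp as <- <- <- <-. split; [lia|auto].
  - destruct Hp as [Hp|[]]. injection Hp as <- <- <- <-. split; [lia|auto].
  - pose proof (cyclic_freq_pos r lam k ltac:(lia) Hl Hc) as Hk.
    destruct (probe_point_spec k lam 0 Hk (Hl 0%nat ltac:(lia))) as [Hx _].
    repeat destruct Hp as [Hp|Hp]; try contradiction; injection Hp as <- <- <- <-;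
      split; lia || lra.
  - pose proof (loop_freq_pos lam k j0 (Hl j0 Hj0) Hf) as Hk.
    destruct (probe_point_spec k lam j0 Hk (Hl j0 Hj0)) as [Hx _].
    repeat destruct Hp as [Hp|Hp]; try contradiction; injection Hp as <- <- <- <-;
      split; lia || lra.
Qed.

Lemma probes_dual_pos r lam k t t' : 0 < k -> (1 <= r)%nat ->
  (forall i, (i < r)%nat -> 0 < lam i) -> In t (modes r lam k) -> In t' (modes r lam k) ->
  eval_samples (probes k lam t) (mode_fun k lam t') = if mode_eq_dec t t' then 1 else 0.
Proof.
  intros Hk Hr Hl Ht Ht'.
  assert (Hnc : forall u, In u (modes r lam k) -> u <> MConst)
    by (intros u Hu ->; destruct (modes_in r lam k MConst Hu) as [[_ H]|[[[H|H] _]|[j [H _]]]];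
        try discriminate; lra).
  assert (Hsin : forall j, In (MLoop j) (modes r lam k) \/ j = 0%nat ->
                   0 < sin (k * probe_point k lam j)).
  { intros j Hj. apply probe_point_spec; [exact Hk|apply Hl]. destruct Hj as [Hj| ->]; [|lia].
    destruct (modes_in r lam k _ Hj) as [[H _]|[[[H|H] _]|[j' [Hj' [H _]]]]]; try discriminate.
    injection Hj' as <-. exact H. }
  pose proof (Hnc t Ht). pose proof (Hnc t' Ht'). pose proof (Hsin 0%nat (or_intror eq_refl)).
  (* direct computation: on edge 0 (where vpos = 0) the cyclic modes are cos(kx) and
     sin(kx), while a loop mode changes sign between the two edges of its loop and
     vanishes on the other loops *)
  unfold eval_samples, probes, mode_fun, trig_fun, mode_P, mode_Q.
  destruct (mode_eq_dec t t') as [<-|Hne].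
  - destruct t as [| | |j]; [congruence| | |]; simpl; rewrite ?vpos_0, ?Rmult_0_r, ?cos_0, ?sin_0.
    + field.
    + field; lra.
    + pose proof (Hsin j (or_introl Ht)). rewrite Nat.eqb_refl. field; lra.
  - destruct t as [| | |j]; [congruence| | |pose proof (Hsin j (or_introl Ht))];
      destruct t' as [| | |j']; try congruence; simpl; rewrite ?vpos_0, ?Rmult_0_r, ?cos_0, ?sin_0.
    all: try (field; lra); try (destruct j'; simpl; field; lra).
    destruct (Nat.eqb_spec j j'); [congruence|]. field; lra.
Qed.

Lemma probes_dual r lam k t t' : 0 <= k -> (2 <= r)%nat ->
  (forall i, (i < r)%nat -> 0 < lam i) -> In t (modes r lam k) -> In t' (modes r lam k) ->
  eval_samples (probes k lam t) (mode_fun k lam t') = if mode_eq_dec t t' then 1 else 0.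
Proof.
  intros Hk Hr Hl Ht Ht'. destruct (Rle_lt_or_eq_dec 0 k Hk) as [Hk'|<-].
  - apply (probes_dual_pos r); auto. lia.
  - rewrite (modes_zero r lam ltac:(lia) Hl) in Ht, Ht'.
    destruct Ht as [<-|[]], Ht' as [<-|[]]. simpl.
    unfold eval_samples, mode_fun, trig_fun. simpl. rewrite Rmult_0_l, cos_0. ring.
Qed.

Lemma modes_indep r lam k : 0 <= k -> (2 <= r)%nat -> (forall i, (i < r)%nat -> 0 < lam i) ->
  ring_indep r lam (length (modes r lam k))
    (fun i => mode_fun k lam (nth i (modes r lam k) MConst)).
Proof.
  intros Hk Hr Hl c Hc i Hi.
  set (L := modes r lam k) in *.
  assert (HtL : In (nth i L MConst) L) by (apply nth_In; auto).
  assert (H0 : eval_samples (probes k lam (nth i L MConst))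
                 (lincomb (length L) c (fun i => mode_fun k lam (nth i L MConst))) = 0)
    by (apply (eval_samples_vanish r lam); [apply probes_on_graph|]; auto).
  rewrite eval_samples_lincomb, (sm_one _ _ i Hi) in H0.
  - rewrite (probes_dual r lam k _ _ Hk Hr Hl HtL HtL) in H0.
    destruct (mode_eq_dec _ _); [lra|congruence].
  - intros i' Hi' Hne. rewrite (probes_dual r lam k _ _ Hk Hr Hl HtL (nth_In _ _ Hi')).
    destruct (mode_eq_dec _ _) as [He|He]; [|ring]. exfalso. apply Hne.
    apply (proj1 (NoDup_nth L MConst) (modes_NoDup r lam k)); auto.
Qed.

Definition mode_comb (k : R) (lam : nat -> R) (cf : mode -> R) (ts : list mode)
    (j : nat) (b : bool) (x : R) : R :=
  fold_right Rplus 0 (map (fun t => cf t * mode_fun k lam t j b x) ts).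

Lemma mode_comb_app k lam cf ts1 ts2 j b x :
  mode_comb k lam cf (ts1 ++ ts2) j b x =
  mode_comb k lam cf ts1 j b x + mode_comb k lam cf ts2 j b x.
Proof. unfold mode_comb. rewrite map_app, fold_right_app. induction ts1; simpl; lra. Qed.

Lemma mode_comb_lincomb k lam cf ts j b x :
  mode_comb k lam cf ts j b x =
  lincomb (length ts) (fun i => cf (nth i ts MConst))
    (fun i => mode_fun k lam (nth i ts MConst)) j b x.
Proof.
  rewrite lincomb_sm. induction ts as [|t ts IH]; [reflexivity|].
  transitivity (cf t * mode_fun k lam t j b x + mode_comb k lam cf ts j b x); [reflexivity|].
  rewrite IH. simpl length. rewrite sm_front. reflexivity.
Qed.

Lemma mode_comb_loop k lam cf r j b x :
  (j < r)%nat -> (forall j', (j' < r)%nat -> ~ loop_freq lam k j' -> cf (MLoop j') = 0) ->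
  mode_comb k lam cf (loop_modes lam k (seq 0 r)) j b x =
  cf (MLoop j) * mode_fun k lam (MLoop j) j b x.
Proof.
  intros Hj Hcf.
  assert (Hsum : forall n, (n <= r)%nat ->
    mode_comb k lam cf (loop_modes lam k (seq 0 n)) j b x =
    sm n (fun j' => cf (MLoop j') * mode_fun k lam (MLoop j') j b x)).
  { induction n as [|n IH]; intro Hn; [reflexivity|].
    unfold loop_modes. rewrite seq_S, flat_map_app, mode_comb_app, sm_S.
    fold (loop_modes lam k (seq 0 n)).
    rewrite IH by lia. f_equal. simpl. unfold include_if.
    destruct (excluded_middle_informative (loop_freq lam k n)) as [_|Hn'];
      unfold mode_comb; cbn [map fold_right app]; [ring|rewrite (Hcf n); [ring|lia|exact Hn']]. }
  rewrite Hsum by lia.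
  apply (sm_one _ (fun j' => cf (MLoop j') * mode_fun k lam (MLoop j') j b x) j Hj).
  intros j' _ Hne. unfold mode_fun, trig_fun. simpl.
  destruct (Nat.eqb_spec j j'); [congruence|ring].
Qed.

Definition loop_mean (Q : nat -> bool -> R) (j : nat) : R := (Q j true + Q j false) / 2.
Definition loop_skew (Q : nat -> bool -> R) (j : nat) : R := (Q j true - Q j false) / 2.

Lemma vertex_transfer r lam k P Q : 0 < k -> (0 < r)%nat -> trig_vertex_conditions r lam k P Q ->
  forall j, (j < r)%nat ->
  let p := prev_vertex r j in
  let c := cos (k * (lam p / 2)) in
  let s := sin (k * (lam p / 2)) in
  P j true = P p true * c + loop_mean Q p * s /\
  loop_mean Q j = - (P p true * s) + loop_mean Q p * c /\
  loop_skew Q p * s = 0.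
Proof.
  intros Hk Hr H j Hj p c s.
  pose proof (H j Hj) as Hv. cbv zeta in Hv. fold p c s in Hv. destruct Hv as [_ [H2 [H3 H4]]].
  pose proof (H p (prev_lt r j Hr Hj)) as [Hp _]. rewrite <- Hp in H3, H4.
  unfold loop_mean, loop_skew. repeat split; [lra| |lra].
  apply (Rmult_eq_reg_l (2 * k)); [|lra]. lra.
Qed.

Definition rot_fst (A B t : R) : R := A * cos t + B * sin t.
Definition rot_snd (A B t : R) : R := - (A * sin t) + B * cos t.

Lemma rot_compose A B t u :
  rot_fst (rot_fst A B t) (rot_snd A B t) u = rot_fst A B (t + u) /\
  rot_snd (rot_fst A B t) (rot_snd A B t) u = rot_snd A B (t + u).
Proof. unfold rot_fst, rot_snd. rewrite cos_plus, sin_plus. split; ring. Qed.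

Lemma rotation_fixed A B t :
  rot_fst A B t = A -> rot_snd A B t = B -> (A = 0 /\ B = 0) \/ cos t = 1.
Proof.
  unfold rot_fst, rot_snd. intros H1 H2.
  assert (Hz : (A * A + B * B) * (1 - cos t) = 0).
  { replace ((A * A + B * B) * (1 - cos t)) with
      (A * (A - (A * cos t + B * sin t)) + B * (B - (- (A * sin t) + B * cos t))) by ring.
    rewrite H1, H2. ring. }
  apply Rmult_integral in Hz as [Hz|Hz]; [left|right; lra].
  pose proof (Rle_0_sqr A). pose proof (Rle_0_sqr B). unfold Rsqr in *. split; nra.
Qed.

Section RotationChain.
Variables (r : nat) (lam : nat -> R) (k : R) (a m : nat -> R).
Hypothesis Hr : (0 < r)%nat.
Hypothesis Htransfer : forall j, (j < r)%nat ->
  let p := prev_vertex r j in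
  a j = rot_fst (a p) (m p) (k * (lam p / 2)) /\ m j = rot_snd (a p) (m p) (k * (lam p / 2)).

Lemma rotation_chain : forall j, (j < r)%nat ->
  a j = rot_fst (a 0%nat) (m 0%nat) (k * vpos lam j) /\
  m j = rot_snd (a 0%nat) (m 0%nat) (k * vpos lam j).
Proof.
  induction j as [|j IH]; intro Hj.
  - rewrite vpos_0, Rmult_0_r. unfold rot_fst, rot_snd. rewrite cos_0, sin_0. split; ring.
  - destruct (Htransfer (S j) Hj) as [H1 H2].
    destruct (prev_cases r (S j) Hr Hj) as [[? _]|[_ Hp]]; [lia|].
    replace (S j - 1)%nat with j in Hp by lia. cbv zeta in H1, H2. rewrite Hp in H1, H2.
    destruct (IH ltac:(lia)) as [-> ->] in H1, H2.
    rewrite vpos_S, Rmult_plus_distr_l, H1, H2. apply rot_compose.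
Qed.

Lemma rotation_wrap :
  rot_fst (a 0%nat) (m 0%nat) (k * vpos lam r) = a 0%nat /\
  rot_snd (a 0%nat) (m 0%nat) (k * vpos lam r) = m 0%nat.
Proof.
  destruct (Htransfer 0%nat Hr) as [H1 H2].
  destruct (prev_cases r 0 Hr Hr) as [[_ Hp]|[? _]]; [|lia].
  cbv zeta in H1, H2. rewrite Hp in H1, H2.
  destruct (rotation_chain (r - 1) ltac:(lia)) as [E1 E2]. rewrite E1, E2 in H1, H2.
  replace (vpos lam r) with (vpos lam (r - 1) + lam (r - 1)%nat / 2)
    by (rewrite <- vpos_S; f_equal; lia).
  rewrite Rmult_plus_distr_l.
  destruct (rot_compose (a 0%nat) (m 0%nat) (k * vpos lam (r - 1)) (k * (lam (r - 1)%nat / 2)))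
    as [R1 R2].
  rewrite <- R1, <- R2. split; symmetry; assumption.
Qed.

End RotationChain.

Lemma sin_zero_pos x : 0 < x -> sin x = 0 -> exists N : nat, (1 <= N)%nat /\ x = INR N * PI.
Proof.
  intros Hx Hs. destruct (sin_eq_0_0 x Hs) as [z ->].
  assert (Hz : (0 < z)%Z).
  { apply lt_IZR. pose proof PI_RGT_0. destruct (Rlt_le_dec 0 (IZR z)); auto.
    assert (IZR z * PI <= 0) by (apply Rmult_le_0_r; lra). lra. }
  exists (Z.to_nat z). split; [lia|]. now rewrite INR_IZR_INZ, Z2Nat.id by lia.
Qed.

Lemma cos_one_pos x : 0 < x -> cos x = 1 -> exists N : nat, (1 <= N)%nat /\ x = 2 * INR N * PI.
Proof.
  intros Hx Hc. replace x with (2 * (x / 2)) in Hc by field. rewrite cos_2a_sin in Hc.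
  destruct (sin_zero_pos (x / 2)) as [N [HN HxN]]; [lra|nra|]. exists N. split; [auto|lra].
Qed.

Lemma cyclic_freq_of_cos r lam k : 0 < k -> (1 <= r)%nat -> (forall i, (i < r)%nat -> 0 < lam i) ->
  cos (k * vpos lam r) = 1 -> cyclic_freq r lam k.
Proof.
  intros Hk Hr Hl Hc1. pose proof (vpos_pos lam r Hl Hr) as Hturn.
  destruct (cos_one_pos (k * vpos lam r)) as [N [HN HkN]]; [nra|exact Hc1|].
  exists N. split; [exact HN|]. unfold vpos in HkN, Hturn.
  apply (Rmult_eq_reg_r (total_length r lam / 2)); [rewrite HkN; field|]; lra.
Qed.

Lemma loop_freq_of_sin lam k j : 0 < k -> 0 < lam j ->
  sin (k * (lam j / 2)) = 0 -> loop_freq lam k j.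
Proof.
  intros Hk Hl Hs. destruct (sin_zero_pos (k * (lam j / 2)) ltac:(nra) Hs) as [N [HN HkN]].
  exists N. split; [exact HN|]. apply (Rmult_eq_reg_r (lam j / 2)); [rewrite HkN; field|]; lra.
Qed.

Lemma trig_fun_modes k lam P Q A B j b x :
  P j false = P j true ->
  P j true = rot_fst A B (k * vpos lam j) -> loop_mean Q j = rot_snd A B (k * vpos lam j) ->
  trig_fun k P Q j b x = A * mode_fun k lam MCos j b x + B * mode_fun k lam MSin j b x
                         + loop_skew Q j * mode_fun k lam (MLoop j) j b x.
Proof.
  intros HP HPt HQ.
  assert (HQb : Q j b = loop_mean Q j + (if b then 1 else -1) * loop_skew Q j)
    by (unfold loop_mean, loop_skew; destruct b; field).
  assert (HPb : P j b = P j true) by (destruct b; auto).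
  unfold mode_fun, trig_fun. simpl. rewrite Nat.eqb_refl, HPb, HQb, HPt, HQ.
  unfold rot_fst, rot_snd. destruct b; ring.
Qed.

Lemma eigenfun_span_pos r lam k f : 0 < k -> (2 <= r)%nat -> (forall i, (i < r)%nat -> 0 < lam i) ->
  ring_eigenfun r lam k f ->
  exists cf : mode -> R, forall j b x, (j < r)%nat -> 0 <= x <= lam j / 2 ->
    f j b x = mode_comb k lam cf (modes r lam k) j b x.
Proof.
  intros Hk Hr Hl Hf.
  destruct (eigenfun_trig r lam k f Hk Hr Hl Hf) as [P [Q [HPQ HfPQ]]].
  pose proof (vertex_transfer r lam k P Q Hk ltac:(lia) HPQ) as HT.
  set (A := P 0%nat true). set (B := loop_mean Q 0%nat).
  assert (Htr : forall j, (j < r)%nat -> let p := prev_vertex r j in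
     P j true = rot_fst (P p true) (loop_mean Q p) (k * (lam p / 2)) /\
     loop_mean Q j = rot_snd (P p true) (loop_mean Q p) (k * (lam p / 2)))
    by (intros j Hj; destruct (HT j Hj) as [H1 [H2 _]]; split; assumption).
  pose proof (rotation_chain r lam k (fun j => P j true) (loop_mean Q) ltac:(lia) Htr) as Hchain.
  destruct (rotation_wrap r lam k (fun j => P j true) (loop_mean Q) ltac:(lia) Htr) as [W1 W2].
  assert (HAB : ~ cyclic_freq r lam k -> A = 0 /\ B = 0).
  { intro Hnc. destruct (rotation_fixed A B _ W1 W2) as [HAB|Hc1]; [exact HAB|].
    exfalso. apply Hnc, cyclic_freq_of_cos; auto; lia. }
  assert (Hskew : forall j, (j < r)%nat -> ~ loop_freq lam k j -> loop_skew Q j = 0).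
  { intros j Hj Hnf. destruct (next_exists r j ltac:(lia) Hj) as [j' [Hj' <-]].
    destruct (HT j' Hj') as [_ [_ Hs]]. apply Rmult_integral in Hs as [Hs|Hs]; [exact Hs|].
    exfalso. apply Hnf, loop_freq_of_sin; auto. }
  exists (fun t => match t with MConst => 0 | MCos => A | MSin => B | MLoop j => loop_skew Q j end).
  intros j b x Hj Hx. rewrite HfPQ by auto.
  destruct (Hchain j Hj) as [C1 C2]. destruct (HPQ j Hj) as [HP _].
  rewrite (trig_fun_modes k lam P Q A B j b x (eq_sym HP) C1 C2).
  unfold modes. rewrite !mode_comb_app, (mode_comb_loop k lam _ r j b x Hj Hskew).
  replace (mode_comb k lam _ (include_if (k = 0) [MConst]) j b x) with 0
    by (unfold include_if; destruct (excluded_middle_informative (k = 0)); [lra|reflexivity]).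
  unfold include_if, mode_comb.
  destruct (excluded_middle_informative (cyclic_freq r lam k)) as [_|Hnc];
    [|destruct (HAB Hnc) as [-> ->]]; simpl; ring.
Qed.

(* For k = 0 every eigenfunction is affine on each edge; the two edges of a loop have
   the same slope d, and Kirchhoff's condition makes d equal on consecutive loops. *)
Lemma eigenfun_zero_affine r lam f : (2 <= r)%nat -> (forall i, (i < r)%nat -> 0 < lam i) ->
  ring_eigenfun r lam 0 f ->
  exists a d : nat -> R,
    (forall j b x, (j < r)%nat -> 0 <= x <= lam j / 2 -> f j b x = a j + d j * x) /\
    (forall j, (j < r)%nat -> let p := prev_vertex r j in
       a j = a p + d p * (lam p / 2) /\ d j = d p).
Proof.
  intros Hr Hl [D0 [D1 [Hedge [Hcont Hkir]]]].
  assert (Hsol : forall j b, (j < r)%nat ->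
     (forall x, 0 <= x <= lam j / 2 -> f j b x = f j b 0 + D0 j b * x) /\ D1 j b = D0 j b)
    by (intros j b Hj; apply edge_solution_zero; [pose proof (Hl j Hj); lra|auto]).
  (* the two edges of loop p reach the same far value from the same start: equal slopes *)
  assert (Hslope : forall j, (j < r)%nat -> let p := prev_vertex r j in
     D0 p true = D0 p false /\ f j true 0 = f p true 0 + D0 p true * (lam p / 2)).
  { intros j Hj p. assert (Hp : (p < r)%nat) by (apply prev_lt; [lia|auto]).
    destruct (Hcont j Hj) as [_ [H2 H3]]. cbv zeta in H2, H3. fold p in H2, H3.
    destruct (Hcont p Hp) as [Hp0 _].
    assert (Hend : 0 <= lam p / 2 <= lam p / 2) by (pose proof (Hl p Hp); lra).
    rewrite (proj1 (Hsol p true Hp) _ Hend) in H2.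
    rewrite (proj1 (Hsol p false Hp) _ Hend), <- Hp0 in H3.
    pose proof (Hl p Hp). split; [apply (Rmult_eq_reg_r (lam p / 2)); lra|lra]. }
  exists (fun j => f j true 0), (fun j => D0 j true). split.
  - intros j b x Hj Hx. rewrite (proj1 (Hsol j b Hj) x Hx).
    destruct (next_exists r j ltac:(lia) Hj) as [j' [Hj' Hpj]]. destruct (Hslope j' Hj') as [Hs _].
    destruct (Hcont j Hj) as [H1 _]. rewrite Hpj in Hs.
    destruct b; [reflexivity|]. now rewrite <- H1, <- Hs.
  - intros j Hj p. destruct (Hslope j Hj) as [Hs Ha]. fold p in Hs. split; [exact Ha|].
    pose proof (Hkir j Hj) as HK. cbv zeta in HK. fold p in HK.
    assert (Hp : (p < r)%nat) by (apply prev_lt; [lia|auto]).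
    rewrite (proj2 (Hsol p true Hp)), (proj2 (Hsol p false Hp)) in HK.
    destruct (next_exists r j ltac:(lia) Hj) as [j' [Hj' Hpj]]. destruct (Hslope j' Hj') as [Hs' _].
    rewrite Hpj in Hs'. lra.
Qed.

(* For k = 0 the common slope d makes the vertex values grow like d * vpos; closing the
   ring forces d = 0, so the eigenfunctions are the constants. *)
Lemma eigenfun_zero_const r lam f : (2 <= r)%nat -> (forall i, (i < r)%nat -> 0 < lam i) ->
  ring_eigenfun r lam 0 f ->
  exists A, forall j b x, (j < r)%nat -> 0 <= x <= lam j / 2 -> f j b x = A.
Proof.
  intros Hr Hl Hf. destruct (eigenfun_zero_affine r lam f Hr Hl Hf) as [a [d [Haff Htr]]].
  assert (Hchain : forall j, (j < r)%nat -> d j = d 0%nat /\ a j = a 0%nat + d 0%nat * vpos lam j).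
  { induction j as [|j IH]; intro Hj; [rewrite vpos_0; split; ring|].
    destruct (Htr (S j) Hj) as [H1 H2].
    destruct (prev_cases r (S j) ltac:(lia) Hj) as [[? _]|[_ Hp]]; [lia|].
    replace (S j - 1)%nat with j in Hp by lia. rewrite Hp in H1, H2.
    destruct (IH ltac:(lia)) as [E1 E2]. rewrite vpos_S. split; nra. }
  assert (Hd0 : d 0%nat = 0).
  { destruct (Htr 0%nat ltac:(lia)) as [H1 _].
    destruct (prev_cases r 0 ltac:(lia) ltac:(lia)) as [[_ Hp]|[? _]]; [|lia].
    cbv zeta in H1. rewrite Hp in H1. destruct (Hchain (r - 1)%nat ltac:(lia)) as [E1 E2].
    assert (Hturn : 0 < vpos lam r) by (apply vpos_pos; auto; lia).
    replace (vpos lam r) with (vpos lam (r - 1) + lam (r - 1)%nat / 2) in Hturn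
      by (rewrite <- vpos_S; f_equal; lia).
    assert (Hz : d 0%nat * (vpos lam (r - 1) + lam (r - 1)%nat / 2) = 0)
      by (rewrite E1, E2 in H1; lra).
    apply Rmult_integral in Hz as [Hz|Hz]; lra. }
  exists (a 0%nat). intros j b x Hj Hx. destruct (Hchain j Hj) as [E1 E2].
  rewrite Haff, E1, E2, Hd0 by auto. ring.
Qed.

Lemma eigenfun_span r lam k f : 0 <= k -> (2 <= r)%nat -> (forall i, (i < r)%nat -> 0 < lam i) ->
  ring_eigenfun r lam k f ->
  exists c : nat -> R, forall j b x, (j < r)%nat -> 0 <= x <= lam j / 2 ->
    f j b x = lincomb (length (modes r lam k)) c
                (fun i => mode_fun k lam (nth i (modes r lam k) MConst)) j b x.
Proof.
  intros Hk Hr Hl Hf. destruct (Rle_lt_or_eq_dec 0 k Hk) as [Hk'|<-].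
  - destruct (eigenfun_span_pos r lam k f Hk' Hr Hl Hf) as [cf Hcf].
    exists (fun i => cf (nth i (modes r lam k) MConst)). intros. rewrite <- mode_comb_lincomb. auto.
  - destruct (eigenfun_zero_const r lam f Hr Hl Hf) as [A HA].
    exists (fun _ => A). intros j b x Hj Hx. rewrite HA, (modes_zero r lam ltac:(lia) Hl) by auto.
    unfold lincomb, mode_fun, trig_fun. simpl. rewrite Rmult_0_l, cos_0. ring.
Qed.

Theorem mainTheorem7 (r : nat) (lam : nat -> R) :
  (2 <= r)%nat ->
  (forall j, (j < r)%nat -> 0 < lam j) ->
  forall k : R, 0 <= k ->
    ring_multiplicity r lam k (predicted_mult r lam k).
Proof.
  intros Hr Hl k Hk. rewrite <- modes_length. split.
  -
    exists (fun i => mode_fun k lam (nth i (modes r lam k) MConst)). split.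
    + intros i Hi. apply modes_eigenfun; auto. apply nth_In; auto.
    + apply modes_indep; auto.
  -
    apply (span_bound r lam (ring_eigenfun r lam k) _
             (fun i => mode_fun k lam (nth i (modes r lam k) MConst))).
    intros f Hf. apply eigenfun_span; auto.
Qed.
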